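(* Let $\mathcal A$ be a finite set, let $R:\mathcal A\to\mathbb R$ and $\hat R_t:\mathcal A\to\mathbb R$ be arbitrary functions, let $a^*\in\mathcal A$ maximize $R$, and let $\gamma_t>0$. Define $\Delta(a)=R(a^* )-R(a)$ and $\hat\Delta_t(a)=\hat R_t(a^* )-\hat R_t(a)$, and for a distribution $\rho$ on $\mathcal A$, $\Delta(\rho)=\sum_a\rho(a)\Delta(a)$, $\hat\Delta_t(\rho)=\sum_a\rho(a)\hat\Delta_t(a)$. Let $$\mu_t^{exp}(a)=\frac{e^{\gamma_tR(a)}}{\sum_{a'}e^{\gamma_tR(a')}},\qquad\rho_t^{exp}(a)=\frac{e^{\gamma_t\hat R_t(a)}}{\sum_{a'}e^{\gamma_t\hat R_t(a')}}.$$ Then $$KL(\rho_t^{exp}\|\mu_t^{exp})\le\gamma_t\Big(\big[\Delta(\rho_t^{exp})-\hat\Delta_t(\rho_t^{exp})\big]+\big[\hat\Delta_t(\mu_t^{exp})-\Delta(\mu_t^{exp})\big]\Big).$$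
   Context: $KL(\rho\|\mu)=\sum_a\rho(a)\ln\frac{\rho(a)}{\mu(a)}$ is the Kullback–Leibler divergence. In the paper $R(a)$ is the expected reward of arm $a$ and $\hat R_t(a)$ an importance-weighted empirical estimate, but the inequality holds for arbitrary real values. *)

From mathcomp Require Import all_boot all_order all_algebra.
From mathcomp Require Import all_classical all_reals all_analysis.
Set Implicit Arguments. Unset Strict Implicit. Unset Printing Implicit Defensive.
Import Order.TTheory GRing.Theory Num.Theory.
Local Open Scope ring_scope.

Definition gibbs (R : realType) (A : finType) (g : R) (f : A -> R) (a : A) : R :=
  expR (g * f a) / \sum_(a' : A) expR (g * f a').

Definition KL (R : realType) (A : finType) (rho mu : A -> R) : R :=
  \sum_(a : A) rho a * ln (rho a / mu a).

Definition gap (R : realType) (A : finType) (f : A -> R) (astar a : A) : R :=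
  f astar - f a.

Definition gapd (R : realType) (A : finType) (f : A -> R) (astar : A) (rho : A -> R) : R :=
  \sum_(a : A) rho a * gap f astar a.

(* KL is bounded by its symmetrization KL(rho||mu) + KL(mu||rho).  For two
   Gibbs distributions with the same temperature the log-partition functions
   cancel in the symmetrization, leaving
   gamma * (E_rho[Rhat - Rw] - E_mu[Rhat - Rw]), which is the right-hand side
   once the gaps are expanded (the terms at astar cancel). *)

From mathcomp Require Import all_boot all_order all_algebra.
From mathcomp Require Import all_classical all_reals all_analysis.
From mathcomp Require Import ring lra.
Import Order.TTheory GRing.Theory Num.Theory.
Local Open Scope ring_scope.
Set Implicit Arguments. Unset Strict Implicit.

Lemma ln_le_subr1 (R : realType) (x : R) : 0 < x -> ln x <= x - 1.
Proof.
by move=> x_gt0; have := @le_ln1Dx R (x - 1); rewrite (addrC 1) subrK; apply; lra.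
Qed.

Section KullbackLeibler.
Variables (R : realType) (A : finType).
Implicit Types (rho mu f h : A -> R) (g : R).

Lemma KL_ge0 rho mu : (forall a, 0 < rho a) -> (forall a, 0 < mu a) ->
  \sum_a mu a = \sum_a rho a -> 0 <= KL rho mu.
Proof.
move=> rho_gt0 mu_gt0 sum_eq.
have term_ge a : rho a - mu a <= rho a * ln (rho a / mu a).
  have ratio_gt0 : 0 < mu a / rho a by rewrite divr_gt0.
  rewrite -invf_div lnV ?posrE // mulrN lerNr opprB.
  have := ler_wpM2l (ltW (rho_gt0 a)) (ln_le_subr1 ratio_gt0).
  by rewrite mulrBr mulr1 mulrCA divff ?mulr1 // gt_eqF.
rewrite -(subrr (\sum_a mu a)) {1}sum_eq -sumrB.
by apply: ler_sum => a _.
Qed.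

Definition log_partition g f := ln (\sum_a expR (g * f a)).

Lemma partition_gt0 (a0 : A) g f : 0 < \sum_a expR (g * f a).
Proof.
rewrite (bigD1 a0) //= ltr_pwDl ?expR_gt0 //.
by apply: sumr_ge0 => a _; rewrite ltW ?expR_gt0.
Qed.

Lemma gibbs_gt0 g f a : 0 < gibbs g f a.
Proof. by rewrite divr_gt0 ?expR_gt0 ?(partition_gt0 a). Qed.

Lemma gibbs_sum1 (a0 : A) g f : \sum_a gibbs g f a = 1.
Proof. by rewrite -mulr_suml divff // gt_eqF ?(partition_gt0 a0). Qed.

Lemma ln_gibbs g f a : ln (gibbs g f a) = g * f a - log_partition g f.
Proof. by rewrite ln_div ?posrE ?expR_gt0 ?(partition_gt0 a) ?expRK. Qed.

Lemma KL_gibbs (a0 : A) g f h :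
  KL (gibbs g f) (gibbs g h) =
  g * \sum_a gibbs g f a * (f a - h a) + (log_partition g h - log_partition g f).
Proof.
rewrite /KL -[X in _ + X]mul1r -(gibbs_sum1 a0 g f) mulr_sumr !mulr_suml -big_split.
apply: eq_bigr => a _ /=.
by rewrite ln_div ?posrE ?gibbs_gt0 // !ln_gibbs; ring.
Qed.

(* The log-partition terms cancel: this is where the common temperature matters. *)
Lemma KL_gibbs_sym (a0 : A) g f h :
  KL (gibbs g f) (gibbs g h) + KL (gibbs g h) (gibbs g f) =
  g * (\sum_a gibbs g f a * (f a - h a) - \sum_a gibbs g h a * (f a - h a)).
Proof.
have swap_diff : \sum_a gibbs g h a * (h a - f a) =
                 - \sum_a gibbs g h a * (f a - h a).
  by rewrite -sumrN; apply: eq_bigr => a _; ring.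
by rewrite !(KL_gibbs a0) swap_diff; ring.
Qed.

Lemma gapdB f h (s : A) rho :
  gapd f s rho - gapd h s rho =
  (f s - h s) * \sum_a rho a - \sum_a rho a * (f a - h a).
Proof.
rewrite /gapd /gap -sumrB mulr_sumr -sumrB.
by apply: eq_bigr => a _; ring.
Qed.

End KullbackLeibler.

Theorem lemma5 (R : realType) (A : finType) (Rw Rhat : A -> R) (astar : A)
  (gamma : R) (hmax : forall a : A, Rw a <= Rw astar) (hgamma : 0 < gamma) :
  let mu := gibbs gamma Rw in
  let rho := gibbs gamma Rhat in
  KL rho mu <=
    gamma * ((gapd Rw astar rho - gapd Rhat astar rho)
             + (gapd Rhat astar mu - gapd Rw astar mu)).
Proof.
cbv zeta; set mu := gibbs gamma Rw; set rho := gibbs gamma Rhat.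
have KL_mu_rho_ge0 : 0 <= KL mu rho.
  by apply: KL_ge0 => [a|a|]; rewrite ?gibbs_gt0 // !(gibbs_sum1 astar).
apply: (le_trans (_ : _ <= KL rho mu + KL mu rho)); first by rewrite lerDl.
rewrite (KL_gibbs_sym astar) -[gapd Rw astar rho - _]opprB !gapdB !(gibbs_sum1 astar).
by rewrite !mulr1 opprB addrA subrK.
Qed.
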